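(* Let $0<p\le\infty$ and $E=\mathcal{L}^p(I)$. If each scale function $\alpha_n$, $n=1,\dots,N$, is non-null almost everywhere, then the linear operator $\mathcal{P}_0^1:E\to E$, $\mathcal{P}_0^1(b):=0*_Tb$, is injective.
   Context: Let $N\ge 2$, $I=[x_0,x_N]$, $\Delta: x_0<\dots<x_N$ a partition, $L_n(x)=a_nx+b_n$ affine with $L_n(x_0)=x_{n-1}$, $L_n(x_N)=x_n$, $I_1=[x_0,x_1]$, $I_n=(x_{n-1},x_n]$ for $n\ge2$, and $\alpha=(\alpha_1,\dots,\alpha_N)\in(\mathcal{L}^\infty(I))^N$ with $\Lambda:=\operatorname{ess\,sup}\{|\alpha_n(x)|:x\in I,n=1,\dots,N\}<1$. For $f,b\in E$, the fractal convolution $f*_Tb$ is the unique fixed point in $E$ of the contraction $Tg(x):=f(x)+\alpha_n(L_n^{-1}(x))(g-b)(L_n^{-1}(x))$, $x\in I_n$; $0$ denotes the null function. *)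

From HB Require Import structures.
From mathcomp Require Import all_boot all_order all_algebra.
From mathcomp Require Import all_classical all_reals all_analysis.
Set Implicit Arguments. Unset Strict Implicit. Unset Printing Implicit Defensive.
Import Order.TTheory GRing.Theory Num.Theory.
Local Open Scope classical_set_scope.
Local Open Scope ring_scope.

Section FractalConv.
Variable R : realType.
Let mu := (@lebesgue_measure R).

(* Partition x_0 < ... < x_N is given by x : nat -> R (only x 0 .. x N matter). *)

Definition Iset (N : nat) (x : nat -> R) : set R := `[x 0%N, x N]%classic.

Definition inIn (x : nat -> R) (n : nat) (y : R) : bool :=
  if n == 1%N then (x 0%N <= y) && (y <= x 1%N)
  else (x n.-1 < y) && (y <= x n).

(* L_n(t) = a_n t + b_n, the affine map with L_n(x_0) = x_{n-1}, L_n(x_N) = x_n *)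
Definition Lmap (N : nat) (x : nat -> R) (n : nat) (t : R) : R :=
  x n.-1 + (x n - x n.-1) / (x N - x 0%N) * (t - x 0%N).

Definition Linv (N : nat) (x : nat -> R) (n : nat) (y : R) : R :=
  x 0%N + (x N - x 0%N) / (x n - x n.-1) * (y - x n.-1).

Definition inLp (N : nat) (x : nat -> R) (p : \bar R) (g : R -> R) : Prop :=
  measurable_fun (Iset N x) g /\
  match p with
  | r%:E => (\int[mu]_(y in Iset N x) ((`|g y| `^ r)%:E) < +oo)%E
  | _ => exists M : R, {ae mu, forall y, Iset N x y -> `|g y| <= M}
  end.

(* equality in E: almost everywhere on I *)
Definition ae_eqI (N : nat) (x : nat -> R) (g h : R -> R) : Prop :=
  {ae mu, forall y, Iset N x y -> g y = h y}.

Definition Top (N : nat) (x : nat -> R) (alpha : nat -> R -> R)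
  (f b g : R -> R) (y : R) : R :=
  \sum_(1 <= n < N.+1)
     (if inIn x n y then
        f y + alpha n (Linv N x n y) * (g (Linv N x n y) - b (Linv N x n y))
      else 0).

(* g = f *_T b : g is the (unique) fixed point in E = L^p(I) of T *)
Definition is_fractal_conv (N : nat) (x : nat -> R) (alpha : nat -> R -> R)
  (p : \bar R) (f b g : R -> R) : Prop :=
  inLp N x p g /\ ae_eqI N x g (Top N x alpha f b g).

End FractalConv.

From HB Require Import structures.
From mathcomp Require Import all_boot all_order all_algebra.
From mathcomp Require Import all_classical all_reals all_analysis.
From mathcomp Require Import measurable_realfun ring lra.
Import Order.TTheory GRing.Theory Num.Theory.
Local Open Scope classical_set_scope.
Local Open Scope ring_scope.

(* With f = 0, the fixed-point equation g = T g restricted to I_1 reads, after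
   the substitution y = L_1 t, g (L_1 t) = alpha_1 t * (g t - b t) for almost
   every t in I: L_1 is affine with positive slope, so it pulls null sets back
   to null sets. If g1 = g2 a.e. then the left-hand sides agree a.e., hence
   alpha_1 * (b1 - b2) = 0 a.e., and alpha_1 vanishes only on a null set. *)

Section affine_preimage.
Context {R : realType} (a : R) {k : R}.
Hypothesis k_gt0 : 0 < k.
Local Notation mu := (@lebesgue_measure R).
Local Notation aff := (fun t : R => a + k * t).

Lemma measurable_affine : measurable_fun [set: R] aff.
Proof. by apply: measurable_funD => //; apply: measurable_funM. Qed.

Lemma lebesgue_measure_affine_preimage (A : set R) : measurable A ->
  mu A = (k%:E * mu (aff @^-1` A))%E.
Proof.
(* [maff] in the context is what lets the pushforward be inferred as a measure. *)
have maff : measurable_fun [set: measurableTypeR R] aff := measurable_affine.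
apply: (@lebesgue_measure_unique R (mscale (NngNum (ltW k_gt0))
  (@pushforward _ _ (measurableTypeR R) (measurableTypeR R) R mu aff))).
move=> _ [[u v] _ <-] /=.
rewrite /mscale /pushforward /=.
pose J : set R := `](u - a) / k, (v - a) / k]%classic.
transitivity (k%:E * mu J)%E; last first.
  congr (_ * mu _)%E; apply/seteqP; split => t /=;
    rewrite /J /= !in_itv /= ltr_pdivrMr // ler_pdivlMr // => /andP[? ?];
    by apply/andP; split; lra.
rewrite !lebesgue_measure_itv /= !lte_fin ltr_pM2r ?invr_gt0 // ltrD2r.
case: ifP => _; last by rewrite mule0.
by rewrite -!EFinB -EFinM; congr (_%:E); field; rewrite gt_eqF.
Qed.

Lemma negligible_affine_preimage (S : set R) :
  mu.-negligible S -> mu.-negligible (aff @^-1` S).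
Proof.
case=> B [mB B0 SB]; exists (aff @^-1` B); split.
- by rewrite -[X in measurable X]setTI; exact: measurable_affine.
- move: (lebesgue_measure_affine_preimage _ mB); rewrite B0 => /esym/eqP.
  by rewrite mule_eq0 eqe gt_eqF //= => /eqP.
- by move=> t /SB.
Qed.

Lemma ae_affine (P : R -> Prop) :
  {ae mu, forall y, P y} -> {ae mu, forall t, P (a + k * t)}.
Proof. exact: negligible_affine_preimage. Qed.

End affine_preimage.

(* The library hint for a.e. filters does not fire on the semiring-of-sets
   structure at which [lebesgue_measure] gets elaborated. *)
#[local] Instance lebesgue_ae_filter (R : realType) :
  Filter (almost_everywhere (@lebesgue_measure R)) :=
  ae_filter_ringOfSetsType (@lebesgue_measure R).

Section affine_pieces.
Context {R : realType} {N : nat} {x : nat -> R} {n : nat}.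
Hypotheses (lt_x_n : x n.-1 < x n) (lt_x_0N : x 0%N < x N).

Lemma Linv_Lmap t : Linv N x n (Lmap N x n t) = t.
Proof. by rewrite /Linv /Lmap; field; rewrite !subr_eq0 !gt_eqF. Qed.

Lemma Lmap_itv t : x 0%N <= t <= x N -> x n.-1 <= Lmap N x n t <= x n.
Proof.
case/andP => t0 tN; have D0 : 0 < x N - x 0%N by rewrite subr_gt0.
have k0 : 0 < x n - x n.-1 by rewrite subr_gt0.
have kt : 0 <= (x n - x n.-1) / (x N - x 0%N) * (t - x 0%N).
  by rewrite mulr_ge0 ?divr_ge0 ?subr_ge0 // ltW.
have kt1 : (x n - x n.-1) / (x N - x 0%N) * (t - x 0%N) <= x n - x n.-1.
  by rewrite mulrAC ler_pdivrMr // ler_pM2l // lerD2r.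
rewrite /Lmap; apply/andP; split; lra.
Qed.

Lemma ae_Lmap (P : R -> Prop) : {ae @lebesgue_measure R, forall y, P y} ->
  {ae @lebesgue_measure R, forall t, P (Lmap N x n t)}.
Proof.
pose k := (x n - x n.-1) / (x N - x 0%N).
have k0 : 0 < k by rewrite divr_gt0 // subr_gt0.
move=> /(ae_affine (x n.-1 - k * x 0%N) k0) aeP; near=> t.
rewrite /Lmap -/k (_ : _ + k * (t - _) = x n.-1 - k * x 0%N + k * t); last by ring.
by near: t.
Unshelve. all: by end_near.
Qed.

End affine_pieces.

Section first_piece.
Context {R : realType} {N : nat} {x : nat -> R}.
Hypotheses (N_gt0 : (0 < N)%N) (x_incr : forall i, (i < N)%N -> x i < x i.+1).

Lemma partition_mono :
  {in [pred i | (i <= N)%N] &, {mono x : i j / (i <= j)%N >-> i <= j}}.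
Proof.
apply: Order.NatMonotonyTheory.incn_inP => [i j _ jN k /andP[_ /ltnW kj]|i _].
  by rewrite inE (leq_trans kj).
by rewrite inE => /x_incr.
Qed.

Let x01 : x 0%N < x 1%N. Proof. exact: x_incr. Qed.
Let x1N : x 1%N <= x N. Proof. by rewrite partition_mono ?inE. Qed.
Let x0N : x 0%N < x N. Proof. exact: lt_le_trans x1N. Qed.

Lemma Top_I1 alpha f b g y : x 0%N <= y <= x 1%N ->
  Top N x alpha f b g y =
  f y + alpha 1%N (Linv N x 1 y) * (g (Linv N x 1 y) - b (Linv N x 1 y)).
Proof.
case/andP=> y0 y1; rewrite /Top big_ltn ?ltnS // /inIn /= y0 y1 /=.
rewrite big_nat_cond big1 ?addr0 // => i /andP[/andP[i2 iN] _].
have x1_le : x 1%N <= x i.-1.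
  rewrite partition_mono ?inE //; first by case: i i2 {iN}.
  exact: leq_trans (leq_pred i) iN.
by rewrite gtn_eqF // ltNge (le_trans y1 x1_le).
Qed.

Lemma Lmap1_I1 t : Iset N x t -> x 0%N <= Lmap N x 1 t <= x 1%N.
Proof. by rewrite /Iset /= in_itv; exact: Lmap_itv. Qed.

Lemma Iset_Lmap1 t : Iset N x t -> Iset N x (Lmap N x 1 t).
Proof.
move=> /Lmap1_I1 /andP[? ?]; rewrite /Iset /= in_itv /=.
by apply/andP; split => //; apply: le_trans x1N.
Qed.

Lemma ae_eqI_Lmap1 g h : ae_eqI N x g h ->
  {ae @lebesgue_measure R, forall t,
    Iset N x t -> g (Lmap N x 1 t) = h (Lmap N x 1 t)}.
Proof.
move=> /(ae_Lmap (n := 1) x01 x0N); apply: filterS => t gh /Iset_Lmap1.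
exact: gh.
Qed.

Lemma fractal_conv_Lmap1 alpha p f b g : is_fractal_conv N x alpha p f b g ->
  {ae @lebesgue_measure R, forall t, Iset N x t ->
    g (Lmap N x 1 t) = f (Lmap N x 1 t) + alpha 1%N t * (g t - b t)}.
Proof.
case=> _ /ae_eqI_Lmap1; apply: filterS => t gT It.
by rewrite gT // Top_I1 ?Lmap1_I1 // Linv_Lmap.
Qed.

End first_piece.

Theorem proposition6p1 (R : realType) (N : nat) (x : nat -> R)
  (alpha : nat -> R -> R) (p : \bar R) :
  (2 <= N)%N ->
  (forall i : nat, (i < N)%N -> x i < x i.+1) ->
  (0 < p)%E ->
  (forall n : nat, (1 <= n <= N)%N -> inLp N x +oo%E (alpha n)) ->
  (exists Lam : R, Lam < 1 /\
     forall n : nat, (1 <= n <= N)%N ->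
       {ae (@lebesgue_measure R), forall y, Iset N x y -> `|alpha n y| <= Lam}) ->
  (forall n : nat, (1 <= n <= N)%N ->
     {ae (@lebesgue_measure R), forall y, Iset N x y -> alpha n y != 0}) ->
  forall b1 b2 g1 g2 : R -> R,
    inLp N x p b1 -> inLp N x p b2 ->
    is_fractal_conv N x alpha p (fun _ => 0) b1 g1 ->
    is_fractal_conv N x alpha p (fun _ => 0) b2 g2 ->
    ae_eqI N x g1 g2 ->
    ae_eqI N x b1 b2.
Proof.
move=> N2 x_incr _ _ _ alpha_nz b1 b2 g1 g2 _ _ conv1 conv2 g12.
have N_gt0 : (0 < N)%N by exact: ltnW.
move/(fractal_conv_Lmap1 N_gt0 x_incr): conv1 => eq1.
move/(fractal_conv_Lmap1 N_gt0 x_incr): conv2 => eq2.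
move/(ae_eqI_Lmap1 N_gt0 x_incr): (g12) => g12L.
near=> t => It.
have a0 : alpha 1%N t != 0 by move: It; near: t; exact: alpha_nz.
have g12t : g1 t = g2 t by move: It; near: t; exact: g12.
have e1 : g1 (Lmap N x 1 t) = 0 + alpha 1%N t * (g1 t - b1 t).
  by move: It; near: t; exact: eq1.
have e2 : g2 (Lmap N x 1 t) = 0 + alpha 1%N t * (g2 t - b2 t).
  by move: It; near: t; exact: eq2.
have eL : g1 (Lmap N x 1 t) = g2 (Lmap N x 1 t).
  by move: It; near: t; exact: g12L.
by move: eL; rewrite e1 e2 g12t !add0r => /(mulfI a0)/addrI/oppr_inj.
Unshelve. all: by end_near.
Qed.
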